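(* Let $U$ be a fixed finite set and let $S\subseteq V\subseteq U$ be random sets such that $\Pr[I\in S\mid I\in V]\ge p>2/3$ for all $I\in U$. Suppose $(V,E)$ is a (random) graph on vertex set $V$ consisting of $k$ connected components, each of which is a cycle or a path. Then \[ \mathbb{E}[|V|]\le\frac{2\mathbb{E}[k]+\mathbb{E}[|T^S|]}{3p-2}. \]
   Context: For a graph $(V,E)$ and $S\subseteq V$, $T^S$ denotes the set of vertices $v\in S$ having at least $2$ neighbors in $S$. *)

From mathcomp Require Import all_boot all_order all_algebra.
Set Implicit Arguments. Unset Strict Implicit. Unset Printing Implicit Defensive.
Import Order.TTheory GRing.Theory Num.Theory.

(* A (simple) graph (V,E) on a vertex set V : {set U} is given by a relation
   e : rel U which is irreflexive, symmetric and only relates vertices of V. *)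
Section Graphs.
Variable U : finType.

Definition is_graph_on (V : {set U}) (e : rel U) : Prop :=
  [/\ irreflexive e, symmetric e & forall x y, e x y -> (x \in V) && (y \in V)].

Definition components (V : {set U}) (e : rel U) : {set {set U}} :=
  [set [set y in V | connect e x y] | x in V].

Definition ncomp (V : {set U}) (e : rel U) : nat := #|components V e|.

Definition consec (s : seq U) (x y : U) : bool :=
  has (fun i => ((nth x s i == x) && (nth x s i.+1 == y))
             || ((nth x s i == y) && (nth x s i.+1 == x)))
      (iota 0 (size s).-1).

Definition is_path_comp (e : rel U) (C : {set U}) : Prop :=
  exists s : seq U, [/\ uniq s, C = [set x in s] &
    {in C &, forall x y, e x y = consec s x y}].

Definition is_cycle_comp (e : rel U) (C : {set U}) : Prop :=
  exists s : seq U, [/\ uniq s, 3 <= size s, C = [set x in s] &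
    {in C &, forall x y, e x y = consec (rcons s (head x s)) x y}].

Definition TS (S : {set U}) (e : rel U) : {set U} :=
  [set v in S | 2 <= #|[set u in S | e v u]|].
End Graphs.

(* Finite probability space: sample space Om with probability mass P. *)
Section Prob.
Local Open Scope ring_scope.
Variables (R : realFieldType) (Om : finType).
Definition is_prob (P : Om -> R) : Prop :=
  (forall w, 0 <= P w) /\ \sum_w P w = 1.
Definition Pr (P : Om -> R) (A : pred Om) : R := \sum_(w | A w) P w.
Definition Ex (P : Om -> R) (X : Om -> R) : R := \sum_w P w * X w.
End Prob.

From mathcomp Require Import all_boot all_order all_algebra.
From mathcomp Require Import zify lra.
Set Implicit Arguments. Unset Strict Implicit. Unset Printing Implicit Defensive.
Import Order.TTheory GRing.Theory Num.Theory.

(* Fix an outcome and enumerate a component as s_0, ..., s_(n-1) so that consecutive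
   vertices are adjacent (for a cycle, forget one edge). If s_i and s_(i+2) lie in S,
   then s_(i+1) is either outside S or in T^S. Hence every vertex of S \ T^S other than
   the two ends of its component has a sequence neighbour outside S, and each vertex
   outside S is such a neighbour at most twice: |S \ T^S| <= 2k + 2|V \ S|, that is,
   3|S| <= 2|V| + 2k + |T^S|. Taking expectations and using E|S| >= p E|V|, which
   follows by summing the hypothesis over I in U, gives (3p - 2) E|V| <= 2 E k + E|T^S|. *)

Lemma sum_le_ends_neighbours (a b : nat -> nat) (n : nat) :
  (forall i, a i <= 1) -> (forall i, i.+2 < n -> a i.+1 <= b i + b i.+2) ->
  \sum_(0 <= i < n) a i <= 2 + 2 * \sum_(0 <= i < n) b i.
Proof.
move=> a_le1 a_interior; case: n a_interior => [|[|m]] a_interior.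
- by rewrite big_geq.
- by rewrite big_nat1 (leq_trans (a_le1 0)).
have interior :
    \sum_(0 <= i < m) a i.+1 <= \sum_(0 <= i < m) b i + \sum_(0 <= i < m) b i.+2.
  rewrite -big_split big_nat_cond [leqRHS]big_nat_cond /=.
  by apply: leq_sum => i /andP[lt_im _]; apply: a_interior.
have b_low : \sum_(0 <= i < m) b i <= \sum_(0 <= i < m.+2) b i.
  by rewrite !big_nat_recr //= -addnA leq_addr.
have b_high : \sum_(0 <= i < m) b i.+2 <= \sum_(0 <= i < m.+2) b i.
  by rewrite !big_nat_recl //= addnA leq_addl.
have := a_le1 0; have := a_le1 m.+1.
rewrite big_nat_recl // big_nat_recr //=; lia.
Qed.

Section CardSums.
Variable T : finType.

Lemma card_setI_sum (A B : {set T}) : #|B :&: A| = \sum_(x in B) (x \in A).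
Proof.
rewrite -sum1_card (eq_bigl (fun x => (x \in B) && (x \in A))) => [|x]; last by rewrite inE.
by rewrite big_mkcondr; apply: eq_bigr => x _; case: (x \in A).
Qed.

Lemma card_setI_partition (P : {set {set T}}) (D A : {set T}) :
  partition P D -> #|D :&: A| = \sum_(C in P) #|C :&: A|.
Proof.
move=> partP; rewrite card_setI_sum (set_partition_big _ partP).
by apply: eq_bigr => C _; rewrite card_setI_sum.
Qed.

Lemma card_setI_seq (x0 : T) (s : seq T) (A : {set T}) : uniq s ->
  #|[set x in s] :&: A| = \sum_(0 <= i < size s) (nth x0 s i \in A).
Proof.
move=> uniq_s; rewrite card_setI_sum (eq_bigl (mem s)) => [|x]; last by rewrite inE.
by rewrite -big_uniq // (big_nth x0).
Qed.

End CardSums.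

Section PathsAndCycles.
Variable U : finType.
Implicit Types (e : rel U) (s : seq U) (S V C : {set U}).

Lemma consec_sorted s : sorted (consec s) s.
Proof.
case: s => // x s'; apply/(sortedP x) => i lt_i; apply/hasP; exists i.
  by rewrite mem_iota; rewrite /= in lt_i *; lia.
have lt_i' : i < size (x :: s') by lia.
by rewrite (set_nth_default x _ lt_i') (set_nth_default x _ lt_i) !eqxx.
Qed.

Lemma consec_rcons s z x y : consec s x y -> consec (rcons s z) x y.
Proof.
case/hasP => i; rewrite mem_iota add0n => /andP[_ lt_i] consec_i.
apply/hasP; exists i; first by rewrite mem_iota size_rcons; lia.
have lt_i1 : i < size s by lia.
have lt_i2 : i.+1 < size s by lia.
by rewrite !nth_rcons lt_i1 lt_i2.
Qed.

Lemma path_comp_enum e C : is_path_comp e C ->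
  exists s, [/\ uniq s, C = [set x in s] & sorted e s].
Proof.
case=> s [uniq_s defC e_consec]; exists s; split => //.
apply: (@sub_in_sorted _ (fun x => x \in C) (consec s)) (consec_sorted s).
  by move=> x y Cx Cy; rewrite e_consec.
by apply/allP => x; rewrite defC inE.
Qed.

Lemma cycle_comp_enum e C : is_cycle_comp e C ->
  exists s, [/\ uniq s, C = [set x in s] & sorted e s].
Proof.
case=> s [uniq_s _ defC e_consec]; exists s; split => //.
apply: (@sub_in_sorted _ (fun x => x \in C) (consec s)) (consec_sorted s).
  by move=> x y Cx Cy /(consec_rcons (head x s)); rewrite e_consec.
by apply/allP => x; rewrite defC inE.
Qed.

Lemma mem_TS_two_neighbours e S x y z : x \in S -> y \in S -> z \in S ->
  y != z -> e x y -> e x z -> x \in TS S e.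
Proof.
move=> Sx Sy Sz neq_yz exy exz; rewrite inE Sx /=.
apply: leq_trans (subset_leq_card (_ : [set y; z] \subset _)).
  by rewrite cards2 neq_yz.
by apply/subsetP => w /set2P[->|->]; rewrite inE ?Sy ?Sz.
Qed.

Lemma card_sorted_STS_le e S s : symmetric e -> uniq s -> sorted e s ->
  #|[set x in s] :&: (S :\: TS S e)| <= 2 + 2 * #|[set x in s] :\: S|.
Proof.
move=> e_sym; case: s => [|x0 s'] uniq_s sorted_s.
  by rewrite (_ : [set x in [::]] = set0) ?set0I ?cards0 //; apply/setP => x; rewrite !inE.
set s := x0 :: s' in uniq_s sorted_s *.
rewrite (setDE _ S) !(card_setI_seq x0) //.
apply: (@sum_le_ends_neighbours (fun i => nth x0 s i \in S :\: TS S e)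
                               (fun i => nth x0 s i \in ~: S)) => [i|i lt_i2].
  exact: leq_b1.
rewrite in_setD !in_setC; case: (boolP (nth x0 s i \in S)) => [Si|]; last first.
  by move=> _; apply: leq_trans (leq_b1 _) (leq_addr _ _).
case: (boolP (nth x0 s i.+2 \in S)) => [Si2|]; last first.
  by move=> _; apply: leq_trans (leq_b1 _) (leq_addl _ _).
case: (boolP (nth x0 s i.+1 \in S)) => [Si1|]; last by rewrite andbF.
have neq_i_i2 : nth x0 s i != nth x0 s i.+2.
  by have lt_i := ltnW (ltnW lt_i2); rewrite nth_uniq // neq_ltn leqnSn.
have /sortedP e_nth := sorted_s.
rewrite (mem_TS_two_neighbours Si1 Si Si2 neq_i_i2) //.
  by rewrite e_sym e_nth // ltnW.
by rewrite e_nth.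
Qed.

End PathsAndCycles.

Section ComponentCount.
Variable U : finType.
Implicit Types (e : rel U) (S V : {set U}).

Lemma components_partition V e : symmetric e -> partition (components V e) V.
Proof.
move=> e_sym; apply: equivalence_partitionP => x y z _ _ _.
by split=> [|/(same_connect (sym_connect_sym e_sym))].
Qed.

Lemma card_S_le_components V S e : S \subset V -> is_graph_on V e ->
  (forall C, C \in components V e -> is_path_comp e C \/ is_cycle_comp e C) ->
  3 * #|S| <= 2 * #|V| + 2 * ncomp V e + #|TS S e|.
Proof.
move=> sSV [_ e_sym _] path_or_cycle.
have partV := components_partition V e_sym.
have STS_le : #|V :&: (S :\: TS S e)| <= 2 * ncomp V e + 2 * #|V :&: ~: S|.
  rewrite !(card_setI_partition _ partV) /ncomp mulnC -sum_nat_const big_distrr -big_split.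
  apply: leq_sum => C /path_or_cycle comp_C.
  have [s [uniq_s -> sorted_s]] : exists s, [/\ uniq s, C = [set x in s] & sorted e s].
    by case: comp_C => [/path_comp_enum | /cycle_comp_enum].
  by rewrite -setDE card_sorted_STS_le.
have sTS : TS S e \subset S by apply/subsetP => x; rewrite inE => /andP[].
have sSTS_V : S :\: TS S e \subset V := subset_trans (subsetDl _ _) sSV.
move: STS_le; rewrite -setDE (setIidPr sSTS_V) !cardsD (setIidPr sSV) (setIidPr sTS).
have := subset_leq_card sSV; have := subset_leq_card sTS; lia.
Qed.

End ComponentCount.

Section Expectation.
Local Open Scope ring_scope.
Variables (R : realFieldType) (Om : finType) (P : Om -> R).
Implicit Types X Y : Om -> R.

Lemma ExD X Y : Ex P (fun w => X w + Y w) = Ex P X + Ex P Y.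
Proof. by rewrite /Ex -big_split; apply: eq_bigr => w _; rewrite mulrDr. Qed.

Lemma ExZ (c : R) X : Ex P (fun w => c * X w) = c * Ex P X.
Proof. by rewrite /Ex mulr_sumr; apply: eq_bigr => w _; rewrite mulrCA. Qed.

Lemma ler_Ex X Y : (forall w, 0 <= P w) -> (forall w, X w <= Y w) -> Ex P X <= Ex P Y.
Proof. by move=> P_ge0 le_XY; apply: ler_sum => w _; rewrite ler_wpM2l. Qed.

Lemma Ex_card (U : finType) (A : Om -> {set U}) :
  Ex P (fun w => #|A w|%:R) = \sum_I Pr P (fun w => I \in A w).
Proof.
rewrite /Ex /Pr (eq_bigr (fun w => \sum_I if I \in A w then P w else 0)).
  by rewrite exchange_big; apply: eq_bigr => I _; rewrite [RHS]big_mkcond.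
move=> w _; rewrite -sum1_card big_mkcond natr_sum mulr_sumr.
by apply: eq_bigr => I _; case: (I \in A w); rewrite ?mulr1 ?mulr0.
Qed.

End Expectation.

Local Open Scope ring_scope.
Unset Implicit Arguments.

Theorem lemma4p13 (R : realFieldType) (U Om : finType) (P : Om -> R)
  (V S : Om -> {set U}) (E : Om -> rel U) (p : R) :
  is_prob P ->
  2 / 3 < p ->
  (forall w, S w \subset V w) ->
  (forall I : U, p * Pr P (fun w => I \in V w)
                 <= Pr P (fun w => (I \in S w) && (I \in V w))) ->
  (forall w, is_graph_on (V w) (E w)) ->
  (forall w, forall C, C \in components (V w) (E w) ->
       is_path_comp (E w) C \/ is_cycle_comp (E w) C) ->
  Ex P (fun w => #|V w|%:R)
    <= (2 * Ex P (fun w => (ncomp (V w) (E w))%:R)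
        + Ex P (fun w => #|TS (S w) (E w)|%:R)) / (3 * p - 2).
Proof.
move=> [P_ge0 _] p_gt sSV PrS_ge graph path_or_cycle.
have EV_le_ES : p * Ex P (fun w => #|V w|%:R) <= Ex P (fun w => #|S w|%:R).
  have PrSV I : Pr P (fun w => (I \in S w) && (I \in V w)) = Pr P (fun w => I \in S w).
    by apply: eq_bigl => w; apply/andb_idr/subsetP.
  by rewrite !Ex_card mulr_sumr; apply: ler_sum => I _; rewrite -PrSV PrS_ge.
have ES_le : 3 * Ex P (fun w => #|S w|%:R) <= 2 * Ex P (fun w => #|V w|%:R)
    + 2 * Ex P (fun w => (ncomp (V w) (E w))%:R) + Ex P (fun w => #|TS (S w) (E w)|%:R).
  rewrite -!ExZ -!ExD; apply: ler_Ex => // w.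
  rewrite -!natrM -!natrD ler_nat.
  exact: card_S_le_components (sSV w) (graph w) (path_or_cycle w).
rewrite ler_pdivlMr; lra.
Qed.
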